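(* Let $\Pi=(\iota,\tau,\beta)$ be a safety problem over a vocabulary $\Sigma$, let $w$ be a fresh constant symbol, and let $\varphi(x)$ be a formula over $\Sigma$ with free variable $x$. Then $\varphi(w)$ is a sound prophecy for $\Pi$ if and only if the following safety problem over the vocabulary $\Sigma\cup\{m\}$, where $m$ is a fresh unary relation symbol, is safe: \[\Pi^{\mathrm{sound}}_{\varphi}=\Big(\iota\wedge\forall x.\,\varphi(x)\to m(x),\ \ \tau\wedge\forall x.\,(m(x)\wedge\varphi(x)\wedge\varphi'(x))\to m'(x),\ \ \beta\wedge\forall x.\,\varphi(x)\to\neg m(x)\Big).\]
   Context: A first-order vocabulary $\Sigma$ consists of constant, function and relation symbols; $\Sigma'=\{a' : a\in\Sigma\}$ is a disjoint copy, and for a formula $\varphi$, $\varphi'$ denotes $\varphi$ with every vocabulary symbol replaced by its primed copy. A state is a first-order structure over the vocabulary. A safety problem is a triple $(\iota,\tau,\beta)$, where $\iota$ (initial states) and $\beta$ (bad states) are closed formulas over $\Sigma$ and $\tau$ (transitions) is a closed formula over $\Sigma\uplus\Sigma'$. A pair of states $(s,t)$ over a common domain is a transition if the structure interpreting the unprimed symbols as in $s$ and the primed ones as in $t$ satisfies $\tau$. A trace is a finite sequence of states over a common domain whose consecutive states form transitions; a trace from $\iota$ to $\beta$ is a trace $s_0,\dots,s_k$ with $s_0\models\iota$ and $s_k\models\beta$. The problem is safe if there is no trace from $\iota$ to $\beta$. $\varphi(w)$ denotes $\varphi$ with $x$ replaced by $w$. The safety problem $\Pi^w_\varphi$ over $\Sigma\cup\{w\}$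 is \[\Pi^w_\varphi=\big(\iota\wedge\varphi(w),\ \varphi(w)\wedge\tau\wedge w'=w\wedge(\varphi(w))',\ \beta\wedge\varphi(w)\big).\] $\varphi(w)$ is a sound prophecy for $\Pi$ if for every trace of $\Pi$ from $\iota$ to $\beta$ there exists an interpretation of $w$ such that the resulting sequence of states is a trace of $\Pi^w_\varphi$ from $\iota\wedge\varphi(w)$ to $\beta\wedge\varphi(w)$. *)

From Stdlib Require Import Arith Fin.

Set Implicit Arguments.

(* Constants are 0-ary function symbols. *)
Record vocab : Type := Vocab {
  fsym : Type; farity : fsym -> nat;
  rsym : Type; rarity : rsym -> nat }.

(* Sigma (+) Sigma' : inl = unprimed symbol a, inr = primed copy a'. *)
Definition vpair (V : vocab) : vocab :=
  Vocab (fun f : fsym V + fsym V => match f with inl g => farity V g | inr g => farity V g end)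
        (fun r : rsym V + rsym V => match r with inl g => rarity V g | inr g => rarity V g end).

(* Sigma u {w}, w a fresh constant symbol (= None). *)
Definition vaddconst (V : vocab) : vocab :=
  Vocab (fun f : option (fsym V) => match f with Some g => farity V g | None => 0 end)
        (rarity V).

(* Sigma u {m}, m a fresh unary relation symbol (= None). *)
Definition vaddrel1 (V : vocab) : vocab :=
  Vocab (farity V)
        (fun r : option (rsym V) => match r with Some g => rarity V g | None => 1 end).

Inductive term (V : vocab) : Type :=
| tvar : nat -> term V
| tapp : forall f : fsym V, (Fin.t (farity V f) -> term V) -> term V.

Inductive formula (V : vocab) : Type :=
| fTrue : formula V
| fFalse : formula V
| fEq : term V -> term V -> formula V
| fRel : forall r : rsym V, (Fin.t (rarity V r) -> term V) -> formula V
| fNot : formula V -> formula V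
| fAnd : formula V -> formula V -> formula V
| fOr : formula V -> formula V -> formula V
| fImp : formula V -> formula V -> formula V
| fForall : nat -> formula V -> formula V
| fExists : nat -> formula V -> formula V.

Arguments tvar {V}.
Arguments fTrue {V}.
Arguments fFalse {V}.

Fixpoint tfree (V : vocab) (n : nat) (t : term V) : Prop :=
  match t with
  | tvar m => n = m
  | tapp f args => exists i, tfree n (args i)
  end.

Fixpoint free (V : vocab) (n : nat) (p : formula V) : Prop :=
  match p with
  | fTrue | fFalse => False
  | fEq a b => tfree n a \/ tfree n b
  | fRel r args => exists i, tfree n (args i)
  | fNot q => free n q
  | fAnd q1 q2 | fOr q1 q2 | fImp q1 q2 => free n q1 \/ free n q2
  | fForall y q | fExists y q => n <> y /\ free n q
  end.

Definition closed (V : vocab) (p : formula V) : Prop := forall n, ~ free n p.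

(* Substitution of a term for the free occurrences of variable x.
   (Only used with closed terms, so no capture can occur.) *)
Fixpoint tsubst (V : vocab) (x : nat) (s : term V) (t : term V) : term V :=
  match t with
  | tvar n => if Nat.eqb n x then s else tvar n
  | tapp f args => tapp f (fun i => tsubst x s (args i))
  end.

Fixpoint fsubst (V : vocab) (x : nat) (s : term V) (p : formula V) : formula V :=
  match p with
  | fTrue => fTrue
  | fFalse => fFalse
  | fEq a b => fEq (tsubst x s a) (tsubst x s b)
  | fRel r args => fRel r (fun i => tsubst x s (args i))
  | fNot q => fNot (fsubst x s q)
  | fAnd q1 q2 => fAnd (fsubst x s q1) (fsubst x s q2)
  | fOr q1 q2 => fOr (fsubst x s q1) (fsubst x s q2)
  | fImp q1 q2 => fImp (fsubst x s q1) (fsubst x s q2)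
  | fForall y q => if Nat.eqb y x then fForall y q else fForall y (fsubst x s q)
  | fExists y q => if Nat.eqb y x then fExists y q else fExists y (fsubst x s q)
  end.

Record vmorph (V W : vocab) : Type := VMorph {
  mf : fsym V -> fsym W;
  mf_ar : forall f, farity W (mf f) = farity V f;
  mr : rsym V -> rsym W;
  mr_ar : forall r, rarity W (mr r) = rarity V r }.

Fixpoint trename (V W : vocab) (h : vmorph V W) (t : term V) : term W :=
  match t with
  | tvar n => tvar n
  | tapp f args => tapp (mf h f) (fun i => trename h (args (Fin.cast i (mf_ar h f))))
  end.

Fixpoint frename (V W : vocab) (h : vmorph V W) (p : formula V) : formula W :=
  match p with
  | fTrue => fTrue
  | fFalse => fFalse
  | fEq a b => fEq (trename h a) (trename h b)
  | fRel r args => fRel (mr h r) (fun i => trename h (args (Fin.cast i (mr_ar h r))))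
  | fNot q => fNot (frename h q)
  | fAnd q1 q2 => fAnd (frename h q1) (frename h q2)
  | fOr q1 q2 => fOr (frename h q1) (frename h q2)
  | fImp q1 q2 => fImp (frename h q1) (frename h q2)
  | fForall y q => fForall y (frename h q)
  | fExists y q => fExists y (frename h q)
  end.

Definition incl_const (V : vocab) : vmorph V (vaddconst V) :=
  @VMorph V (vaddconst V) (@Some _) (fun _ => eq_refl) (fun r => r) (fun _ => eq_refl).
Definition incl_rel (V : vocab) : vmorph V (vaddrel1 V) :=
  @VMorph V (vaddrel1 V) (fun f => f) (fun _ => eq_refl) (@Some _) (fun _ => eq_refl).
Definition unprimed (V : vocab) : vmorph V (vpair V) :=
  @VMorph V (vpair V) (@inl _ _) (fun _ => eq_refl) (@inl _ _) (fun _ => eq_refl).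
Definition primed (V : vocab) : vmorph V (vpair V) :=
  @VMorph V (vpair V) (@inr _ _) (fun _ => eq_refl) (@inr _ _) (fun _ => eq_refl).
Definition pair_morph (V W : vocab) (h : vmorph V W) : vmorph (vpair V) (vpair W) :=
  @VMorph (vpair V) (vpair W)
    (fun f => match f with inl g => inl (mf h g) | inr g => inr (mf h g) end)
    (fun f => match f with inl g => mf_ar h g | inr g => mf_ar h g end)
    (fun r => match r with inl g => inl (mr h g) | inr g => inr (mr h g) end)
    (fun r => match r with inl g => mr_ar h g | inr g => mr_ar h g end).

Definition fprime (V : vocab) (p : formula V) : formula (vpair V) := frename (primed V) p.
Definition funprimed (V : vocab) (p : formula V) : formula (vpair V) := frename (unprimed V) p.

Record structure (V : vocab) (D : Type) : Type := Structure {
  fint : forall f : fsym V, (Fin.t (farity V f) -> D) -> D;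
  rint : forall r : rsym V, (Fin.t (rarity V r) -> D) -> Prop }.

Definition upd (D : Type) (env : nat -> D) (x : nat) (d : D) : nat -> D :=
  fun n => if Nat.eqb n x then d else env n.

Fixpoint teval (V : vocab) (D : Type) (M : structure V D) (env : nat -> D) (t : term V) : D :=
  match t with
  | tvar n => env n
  | tapp f args => fint M f (fun i => teval M env (args i))
  end.

Fixpoint sat (V : vocab) (D : Type) (M : structure V D) (env : nat -> D) (p : formula V) : Prop :=
  match p with
  | fTrue => True
  | fFalse => False
  | fEq a b => teval M env a = teval M env b
  | fRel r args => rint M r (fun i => teval M env (args i))
  | fNot q => ~ sat M env q
  | fAnd q1 q2 => sat M env q1 /\ sat M env q2
  | fOr q1 q2 => sat M env q1 \/ sat M env q2
  | fImp q1 q2 => sat M env q1 -> sat M env q2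
  | fForall y q => forall d : D, sat M (upd env y d) q
  | fExists y q => exists d : D, sat M (upd env y d) q
  end.

Definition holds (V : vocab) (D : Type) (M : structure V D) (p : formula V) : Prop :=
  forall env : nat -> D, sat M env p.

Definition combine (V : vocab) (D : Type) (s t : structure V D) : structure (vpair V) D :=
  @Structure (vpair V) D
    (fun f => match f as f0 return (Fin.t (farity (vpair V) f0) -> D) -> D with
              | inl g => fint s g | inr g => fint t g end)
    (fun r => match r as r0 return (Fin.t (rarity (vpair V) r0) -> D) -> Prop with
              | inl g => rint s g | inr g => rint t g end).

Record safety_problem (V : vocab) : Type := SafetyProblem {
  sp_init : formula V;
  sp_trans : formula (vpair V);
  sp_bad : formula V }.

Definition well_formed_sp (V : vocab) (P : safety_problem V) : Prop :=
  closed (sp_init P) /\ closed (sp_trans P) /\ closed (sp_bad P).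

Definition is_transition (V : vocab) (P : safety_problem V) (D : Type)
  (s t : structure V D) : Prop := holds (combine s t) (sp_trans P).

Definition trace_init_bad (V : vocab) (P : safety_problem V) (D : Type) (k : nat)
  (s : nat -> structure V D) : Prop :=
  inhabited D /\
  holds (s 0) (sp_init P) /\
  (forall i, i < k -> is_transition P (s i) (s (S i))) /\
  holds (s k) (sp_bad P).

Definition safe (V : vocab) (P : safety_problem V) : Prop :=
  forall (D : Type) (k : nat) (s : nat -> structure V D), ~ @trace_init_bad V P D k s.

Definition wterm (V : vocab) : term (vaddconst V) :=
  @tapp (vaddconst V) None (fun i : Fin.t 0 => Fin.case0 (fun _ => term (vaddconst V)) i).

Definition phi_w (V : vocab) (x : nat) (phi : formula V) : formula (vaddconst V) :=
  fsubst x (wterm V) (frename (incl_const V) phi).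

Definition Pi_w (V : vocab) (P : safety_problem V) (x : nat) (phi : formula V)
  : safety_problem (vaddconst V) :=
  SafetyProblem
    (fAnd (frename (incl_const V) (sp_init P)) (phi_w x phi))
    (fAnd (funprimed (phi_w x phi))
      (fAnd (frename (pair_morph (incl_const V)) (sp_trans P))
        (fAnd (fEq (trename (primed _) (wterm V)) (trename (unprimed _) (wterm V)))
              (fprime (phi_w x phi)))))
    (fAnd (frename (incl_const V) (sp_bad P)) (phi_w x phi)).

Definition expand_const (V : vocab) (D : Type) (M : structure V D) (d : D)
  : structure (vaddconst V) D :=
  @Structure (vaddconst V) D
    (fun f => match f as f0 return (Fin.t (farity (vaddconst V) f0) -> D) -> D with
              | Some g => fint M g | None => fun _ => d end)
    (rint M).

Definition sound_prophecy (V : vocab) (P : safety_problem V) (x : nat) (phi : formula V)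
  : Prop :=
  forall (D : Type) (k : nat) (s : nat -> structure V D),
    @trace_init_bad V P D k s ->
    exists d : D, @trace_init_bad _ (Pi_w P x phi) D k (fun i => expand_const (s i) d).

Definition m_atom (V : vocab) (x : nat) : formula (vaddrel1 V) :=
  @fRel (vaddrel1 V) None (fun _ => tvar x).

Definition Pi_sound (V : vocab) (P : safety_problem V) (x : nat) (phi : formula V)
  : safety_problem (vaddrel1 V) :=
  let phim := frename (incl_rel V) phi in
  SafetyProblem
    (fAnd (frename (incl_rel V) (sp_init P)) (fForall x (fImp phim (m_atom V x))))
    (fAnd (frename (pair_morph (incl_rel V)) (sp_trans P))
      (fForall x (fImp (fAnd (funprimed (m_atom V x)) (fAnd (funprimed phim) (fprime phim)))
                       (fprime (m_atom V x)))))
    (fAnd (frename (incl_rel V) (sp_bad P)) (fForall x (fImp phim (fNot (m_atom V x))))).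

From Stdlib Require Import Arith Fin FunctionalExtensionality Classical Lia.

(** A trace of [Pi_sound] is a trace of [P] together with sets [m_0, ..., m_k]
    such that [m_0] contains every element satisfying [phi] in [s_0], membership
    is propagated from [m_i] to [m_(i+1)] along elements satisfying [phi] in both
    [s_i] and [s_(i+1)], and [m_k] avoids the elements satisfying [phi] in [s_k].
    Every such marking contains the elements satisfying [phi] at all steps so far,
    and these sets themselves form a marking unless some element satisfies [phi] at
    every step.  Hence a trace of [P] extends to a trace of [Pi_sound] iff no
    element satisfies [phi] throughout it, i.e. iff no value of [w] turns it into a
    trace of [Pi_w]. *)

Definition reduct (V W : vocab) (h : vmorph V W) (D : Type) (M : structure W D)
  : structure V D :=
  @Structure V D (fun f a => fint M (mf h f) (fun i => a (Fin.cast i (mf_ar h f))))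
                 (fun r a => rint M (mr h r) (fun i => a (Fin.cast i (mr_ar h r)))).
Arguments reduct {V W} h {D} M.

Definition expand_rel (V : vocab) (D : Type) (M : structure V D) (m : D -> Prop)
  : structure (vaddrel1 V) D :=
  @Structure (vaddrel1 V) D (fint M)
    (fun r => match r as r0 return (Fin.t (rarity (vaddrel1 V) r0) -> D) -> Prop with
              | Some g => rint M g | None => fun a => m (a Fin.F1) end).
Arguments expand_rel {V D} M m.

Lemma structure_ext (V : vocab) (D : Type) (M N : structure V D) :
  (forall f a, fint M f a = fint N f a) -> (forall r a, rint M r a = rint N r a) ->
  M = N.
Proof.
  destruct M as [F R], N as [F' R']; simpl; intros HF HR.
  f_equal; apply functional_extensionality_dep; intro;
    apply functional_extensionality; auto.
Qed.

Lemma cast_id (n : nat) (i : Fin.t n) (e : n = n) : Fin.cast i e = i.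
Proof. induction i; simpl; [reflexivity | now rewrite IHi]. Qed.

Lemma fin1_fun_const (D : Type) (a : Fin.t 1 -> D) : a = fun _ => a Fin.F1.
Proof.
  apply functional_extensionality; intro i.
  apply (Fin.caseS' i (fun i => a i = a Fin.F1)); [reflexivity | apply Fin.case0].
Qed.

Ltac reduct_ext :=
  apply structure_ext; intros; simpl; f_equal;
  apply functional_extensionality; intro; apply f_equal, cast_id.

Lemma reduct_expand_const (V : vocab) (D : Type) (M : structure V D) (d : D) :
  reduct (incl_const V) (expand_const M d) = M.
Proof. reduct_ext. Qed.

Lemma reduct_expand_rel (V : vocab) (D : Type) (M : structure V D) (m : D -> Prop) :
  reduct (incl_rel V) (expand_rel M m) = M.
Proof. reduct_ext. Qed.

Lemma reduct_unprimed_combine (V : vocab) (D : Type) (M N : structure V D) :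
  reduct (unprimed V) (combine M N) = M.
Proof. reduct_ext. Qed.

Lemma reduct_primed_combine (V : vocab) (D : Type) (M N : structure V D) :
  reduct (primed V) (combine M N) = N.
Proof. reduct_ext. Qed.

Lemma reduct_pair_morph_combine (V W : vocab) (h : vmorph V W) (D : Type)
  (M N : structure W D) :
  reduct (pair_morph h) (combine M N) = combine (reduct h M) (reduct h N).
Proof. apply structure_ext; intros [f|f] a; reflexivity. Qed.

Lemma expand_rel_reduct (V : vocab) (D : Type) (M : structure (vaddrel1 V) D) :
  M = expand_rel (reduct (incl_rel V) M) (fun d => rint M None (fun _ => d)).
Proof.
  apply structure_ext; simpl.
  - intros f a; f_equal; apply functional_extensionality; intro i; now rewrite cast_id.
  - intros [r|] a; simpl.
    + f_equal; apply functional_extensionality; intro i; now rewrite cast_id.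
    + now rewrite (fin1_fun_const _ a) at 1.
Qed.

Lemma teval_rename (V W : vocab) (h : vmorph V W) (D : Type) (M : structure W D)
  (env : nat -> D) (t : term V) :
  teval M env (trename h t) = teval (reduct h M) env t.
Proof.
  induction t as [n|f args IH]; simpl; [reflexivity|].
  f_equal; apply functional_extensionality; intro i; apply IH.
Qed.

Lemma sat_rename (V W : vocab) (h : vmorph V W) (D : Type) (M : structure W D)
  (p : formula V) :
  forall env, sat M env (frename h p) <-> sat (reduct h M) env p.
Proof.
  induction p; intro env; simpl; try tauto.
  - rewrite !teval_rename; tauto.
  - replace (fun i => teval M env (trename h (t (Fin.cast i (mr_ar h r)))))
      with (fun i => teval (reduct h M) env (t (Fin.cast i (mr_ar h r)))); [tauto|].
    apply functional_extensionality; intro i; now rewrite teval_rename.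
  - rewrite IHp; tauto.
  - rewrite IHp1, IHp2; tauto.
  - rewrite IHp1, IHp2; tauto.
  - rewrite IHp1, IHp2; tauto.
  - split; intros H d; apply IHp, H.
  - split; intros [d H]; exists d; apply IHp, H.
Qed.

Lemma holds_rename (V W : vocab) (h : vmorph V W) (D : Type) (M : structure W D)
  (p : formula V) :
  holds M (frename h p) <-> holds (reduct h M) p.
Proof. split; intros H env; apply sat_rename, H. Qed.

Lemma holds_and (V : vocab) (D : Type) (M : structure V D) (p q : formula V) :
  holds M (fAnd p q) <-> holds M p /\ holds M q.
Proof. unfold holds; simpl; firstorder. Qed.

Lemma holds_env_indep {V : vocab} {D : Type} {M : structure V D} {p : formula V}
  {Q : Prop} :
  inhabited D -> (forall env, sat M env p <-> Q) -> (holds M p <-> Q).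
Proof.
  intros [d] HQ; split.
  - intro H; apply (HQ (fun _ => d)), H.
  - intros H env; apply HQ, H.
Qed.

Lemma upd_eq (D : Type) (env : nat -> D) (x : nat) (d : D) : upd env x d x = d.
Proof. unfold upd; now rewrite Nat.eqb_refl. Qed.

Lemma upd_upd_eq (D : Type) (env : nat -> D) (x : nat) (a d : D) :
  upd (upd env x a) x d = upd env x d.
Proof.
  apply functional_extensionality; intro n; unfold upd; now destruct (Nat.eqb n x).
Qed.

Lemma upd_upd_comm (D : Type) (env : nat -> D) (x y : nat) (a d : D) :
  x <> y -> upd (upd env x a) y d = upd (upd env y d) x a.
Proof.
  intro Hxy; apply functional_extensionality; intro n; unfold upd.
  destruct (Nat.eqb_spec n y), (Nat.eqb_spec n x); subst; congruence.
Qed.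

Section Substitution.
Variables (V : vocab) (D : Type) (M : structure V D) (x : nat) (s : term V).
Hypothesis s_env_indep : forall env env', teval M env s = teval M env' s.

Lemma teval_subst (t : term V) :
  forall env, teval M env (tsubst x s t) = teval M (upd env x (teval M env s)) t.
Proof.
  induction t as [n|f args IH]; intro env; simpl.
  - unfold upd; now destruct (Nat.eqb n x).
  - f_equal; apply functional_extensionality; intro i; apply IH.
Qed.

Lemma sat_subst (p : formula V) :
  forall env, sat M env (fsubst x s p) <-> sat M (upd env x (teval M env s)) p.
Proof.
  induction p; intro env; simpl; try tauto.
  - rewrite !teval_subst; tauto.
  - replace (fun i => teval M env (tsubst x s (t i)))
      with (fun i => teval M (upd env x (teval M env s)) (t i)); [tauto|].
    apply functional_extensionality; intro i; now rewrite teval_subst.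
  - rewrite IHp; tauto.
  - rewrite IHp1, IHp2; tauto.
  - rewrite IHp1, IHp2; tauto.
  - rewrite IHp1, IHp2; tauto.
  - destruct (Nat.eqb_spec n x) as [->|Hnx]; simpl.
    + split; intros H d; specialize (H d); rewrite upd_upd_eq in *; exact H.
    + split; intros H d; specialize (H d).
      * rewrite IHp, (s_env_indep _ env) in H; rewrite upd_upd_comm by congruence; exact H.
      * rewrite IHp, (s_env_indep _ env); rewrite upd_upd_comm in H by congruence; exact H.
  - destruct (Nat.eqb_spec n x) as [->|Hnx]; simpl.
    + split; intros [d H]; exists d; rewrite upd_upd_eq in *; exact H.
    + split; intros [d H]; exists d.
      * rewrite IHp, (s_env_indep _ env) in H; rewrite upd_upd_comm by congruence; exact H.
      * rewrite IHp, (s_env_indep _ env); rewrite upd_upd_comm in H by congruence; exact H.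
Qed.
End Substitution.

Lemma teval_coincidence {V : vocab} {D : Type} (M : structure V D) (t : term V) :
  forall env env', (forall n, tfree n t -> env n = env' n) ->
  teval M env t = teval M env' t.
Proof.
  induction t as [n|f args IH]; intros env env' H; simpl in *; [now apply H|].
  f_equal; apply functional_extensionality; intro i; apply IH; eauto.
Qed.

Lemma sat_coincidence (V : vocab) (D : Type) (M : structure V D) (p : formula V) :
  forall env env', (forall n, free n p -> env n = env' n) ->
  (sat M env p <-> sat M env' p).
Proof.
  induction p; intros env env' H; simpl in *; try tauto.
  - rewrite (teval_coincidence M t env env'), (teval_coincidence M t0 env env'); auto.
    tauto.
  - replace (fun i => teval M env (t i)) with (fun i => teval M env' (t i)); [tauto|].
    apply functional_extensionality; intro i; symmetry; apply teval_coincidence; eauto.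
  - rewrite (IHp env env'); auto; tauto.
  - rewrite (IHp1 env env'), (IHp2 env env'); auto; tauto.
  - rewrite (IHp1 env env'), (IHp2 env env'); auto; tauto.
  - rewrite (IHp1 env env'), (IHp2 env env'); auto; tauto.
  - assert (Hd : forall d, sat M (upd env n d) p <-> sat M (upd env' n d) p).
    { intro d; apply IHp; intros m Hm; unfold upd; destruct (Nat.eqb_spec m n); auto. }
    split; intros H1 d; apply Hd; auto.
  - assert (Hd : forall d, sat M (upd env n d) p <-> sat M (upd env' n d) p).
    { intro d; apply IHp; intros m Hm; unfold upd; destruct (Nat.eqb_spec m n); auto. }
    split; intros [d H1]; exists d; apply Hd; auto.
Qed.

(** [m i] plays the role of the relation [m] in the [i]-th state of a trace of
    [Pi_sound], and [ph i] that of [phi] in the [i]-th state. *)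
Definition prophecy_marking {D : Type} (ph : nat -> D -> Prop) (k : nat)
  (m : nat -> D -> Prop) : Prop :=
  (forall d, ph 0 d -> m 0 d) /\
  (forall i d, i < k -> m i d -> ph i d -> ph (S i) d -> m (S i) d) /\
  (forall d, ph k d -> ~ m k d).

Lemma prophecy_marking_contains_prefix_witness {D : Type} (ph : nat -> D -> Prop)
  (k : nat) (m : nat -> D -> Prop) :
  prophecy_marking ph k m ->
  forall d i, i <= k -> (forall j, j <= i -> ph j d) -> m i d.
Proof.
  intros (H0 & HS & _) d i; induction i as [|i IH]; intros Hik Hph.
  - apply H0, Hph; lia.
  - apply HS; [lia | apply IH | apply Hph..]; auto with arith.
Qed.

Lemma common_witness_iff_no_marking (D : Type) (ph : nat -> D -> Prop) (k : nat) :
  (exists d, forall i, i <= k -> ph i d) <-> ~ exists m, prophecy_marking ph k m.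
Proof.
  split.
  - intros [d Hd] [m Hm].
    apply (proj2 (proj2 Hm) d (Hd k (le_n k))).
    apply (prophecy_marking_contains_prefix_witness _ _ _ Hm); auto.
  - intro Hno; apply NNPP; intro Hnone; apply Hno.
    exists (fun i d => forall j, j <= i -> ph j d); split; [|split].
    + intros d H0 j Hj; replace j with 0 by lia; exact H0.
    + intros i d _ Hm _ HS j Hj.
      destruct (Nat.eq_dec j (S i)) as [->|]; [exact HS | apply Hm; lia].
    + intros d _ Hall; apply Hnone; exists d; exact Hall.
Qed.

Section Prophecy.
Variables (V : vocab) (x : nat) (phi : formula V).
Hypothesis phi_free : forall n, free n phi -> n = x.

Definition phi_holds_at {D : Type} (M : structure V D) (d : D) : Prop :=
  sat M (fun _ => d) phi.

Lemma sat_phi_upd {D : Type} (M : structure V D) (env : nat -> D) (d : D) :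
  sat M (upd env x d) phi <-> phi_holds_at M d.
Proof.
  apply sat_coincidence; intros n Hn; apply phi_free in Hn as ->; apply upd_eq.
Qed.

Lemma sat_phi_w {D : Type} (M : structure V D) (d : D) (env : nat -> D) :
  sat (expand_const M d) env (phi_w x phi) <-> phi_holds_at M d.
Proof.
  unfold phi_w; rewrite sat_subst by reflexivity.
  change (teval (expand_const M d) env (wterm V)) with d.
  rewrite sat_rename, reduct_expand_const; apply sat_phi_upd.
Qed.

Lemma sat_phi_expand_rel {D : Type} (M : structure V D) (m : D -> Prop)
  (env : nat -> D) (d : D) :
  sat (expand_rel M m) (upd env x d) (frename (incl_rel V) phi) <-> phi_holds_at M d.
Proof. rewrite sat_rename, reduct_expand_rel; apply sat_phi_upd. Qed.

Variable P : safety_problem V.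

Lemma holds_and_phi_w {D : Type} (M : structure V D) (d : D) (p : formula V) :
  inhabited D ->
  holds (expand_const M d) (fAnd (frename (incl_const V) p) (phi_w x phi)) <->
  holds M p /\ phi_holds_at M d.
Proof.
  intro HD.
  rewrite holds_and, holds_rename, reduct_expand_const,
    (holds_env_indep HD (sat_phi_w M d)).
  tauto.
Qed.

Lemma is_transition_Pi_w {D : Type} (M N : structure V D) (d : D) :
  inhabited D ->
  is_transition (Pi_w P x phi) (expand_const M d) (expand_const N d) <->
  is_transition P M N /\ phi_holds_at M d /\ phi_holds_at N d.
Proof.
  intro HD; unfold is_transition, Pi_w, funprimed, fprime; simpl.
  rewrite !holds_and, !holds_rename, reduct_pair_morph_combine, !reduct_expand_const,
    reduct_unprimed_combine, reduct_primed_combine,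
    !(holds_env_indep HD (sat_phi_w _ d)).
  assert (Hw : holds (combine (expand_const M d) (expand_const N d))
                 (fEq (trename (primed _) (wterm V)) (trename (unprimed _) (wterm V))))
    by (intro; reflexivity).
  tauto.
Qed.

Lemma trace_Pi_w_iff (D : Type) (k : nat) (s : nat -> structure V D) (d : D) :
  trace_init_bad (Pi_w P x phi) k (fun i => expand_const (s i) d) <->
  trace_init_bad P k s /\ forall i, i <= k -> phi_holds_at (s i) d.
Proof.
  unfold trace_init_bad; simpl.
  split.
  - intros (HD & Hi & Ht & Hb).
    apply holds_and_phi_w in Hi as [Hi _], Hb as [Hb Hbk]; auto.
    split; [split; [exact HD | split; [exact Hi | split; [|exact Hb]]] |].
    + intros i Hik; apply (is_transition_Pi_w (s i) (s (S i)) d HD), Ht, Hik.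
    + intros i Hik; destruct (Nat.eq_dec i k) as [->|]; [exact Hbk|].
      apply (is_transition_Pi_w (s i) (s (S i)) d HD), Ht; lia.
  - intros ((HD & Hi & Ht & Hb) & Hphi).
    split; [exact HD | split; [|split]].
    + apply holds_and_phi_w; auto with arith.
    + intros i Hik; apply is_transition_Pi_w; auto with arith.
    + apply holds_and_phi_w; auto.
Qed.

Lemma sound_prophecy_iff :
  sound_prophecy P x phi <->
  forall D k (s : nat -> structure V D), trace_init_bad P k s ->
    exists d, forall i, i <= k -> phi_holds_at (s i) d.
Proof.
  split; intros H D k s Htr; destruct (H D k s Htr) as [d Hd]; exists d.
  - now apply trace_Pi_w_iff in Hd.
  - now apply trace_Pi_w_iff.
Qed.

Lemma holds_init_Pi_sound {D : Type} (M : structure V D) (m : D -> Prop) :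
  inhabited D ->
  holds (expand_rel M m) (sp_init (Pi_sound P x phi)) <->
  holds M (sp_init P) /\ forall d, phi_holds_at M d -> m d.
Proof.
  intro HD; simpl; rewrite holds_and, holds_rename, reduct_expand_rel.
  enough (Hm : holds (expand_rel M m) (fForall x (fImp (frename (incl_rel V) phi)
                                                       (m_atom V x)))
               <-> forall d, phi_holds_at M d -> m d) by (rewrite Hm; tauto).
  apply (holds_env_indep HD); intro env; simpl.
  split; intros H d; specialize (H d); rewrite sat_phi_expand_rel, upd_eq in *; exact H.
Qed.

Lemma holds_bad_Pi_sound {D : Type} (M : structure V D) (m : D -> Prop) :
  inhabited D ->
  holds (expand_rel M m) (sp_bad (Pi_sound P x phi)) <->
  holds M (sp_bad P) /\ forall d, phi_holds_at M d -> ~ m d.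
Proof.
  intro HD; simpl; rewrite holds_and, holds_rename, reduct_expand_rel.
  enough (Hm : holds (expand_rel M m) (fForall x (fImp (frename (incl_rel V) phi)
                                                       (fNot (m_atom V x))))
               <-> forall d, phi_holds_at M d -> ~ m d) by (rewrite Hm; tauto).
  apply (holds_env_indep HD); intro env; simpl.
  split; intros H d; specialize (H d); rewrite sat_phi_expand_rel, upd_eq in *; exact H.
Qed.

Lemma is_transition_Pi_sound {D : Type} (M N : structure V D) (m n : D -> Prop) :
  inhabited D ->
  is_transition (Pi_sound P x phi) (expand_rel M m) (expand_rel N n) <->
  is_transition P M N /\
  forall d, m d -> phi_holds_at M d -> phi_holds_at N d -> n d.
Proof.
  intro HD; unfold is_transition; simpl.
  rewrite holds_and, holds_rename, reduct_pair_morph_combine, !reduct_expand_rel.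
  apply and_iff_compat_l, (holds_env_indep HD); intro env; simpl.
  unfold funprimed, fprime; setoid_rewrite sat_rename.
  rewrite reduct_unprimed_combine, reduct_primed_combine.
  split; intros H d; specialize (H d); rewrite !sat_phi_expand_rel in *;
    simpl in *; rewrite !upd_eq in *; tauto.
Qed.

Lemma trace_Pi_sound_iff (D : Type) (k : nat) (s : nat -> structure V D)
  (m : nat -> D -> Prop) :
  trace_init_bad (Pi_sound P x phi) k (fun i => expand_rel (s i) (m i)) <->
  trace_init_bad P k s /\ prophecy_marking (fun i d => phi_holds_at (s i) d) k m.
Proof.
  unfold trace_init_bad, prophecy_marking.
  split.
  - intros (HD & Hi & Ht & Hb).
    apply holds_init_Pi_sound in Hi as [Hi Hm0]; [|exact HD].
    apply holds_bad_Pi_sound in Hb as [Hb Hmk]; [|exact HD].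
    split; [split; [exact HD | split; [exact Hi | split; [|exact Hb]]] |].
    + intros i Hik; apply (is_transition_Pi_sound (s i) (s (S i)) (m i) (m (S i)) HD), Ht, Hik.
    + split; [exact Hm0 | split; [|exact Hmk]].
      intros i d Hik; apply (is_transition_Pi_sound (s i) (s (S i)) (m i) (m (S i)) HD), Ht, Hik.
  - intros ((HD & Hi & Ht & Hb) & Hm0 & HmS & Hmk).
    split; [exact HD | split; [|split]].
    + apply holds_init_Pi_sound; auto.
    + intros i Hik; apply is_transition_Pi_sound; auto.
    + apply holds_bad_Pi_sound; auto.
Qed.

Lemma safe_Pi_sound_iff :
  safe (Pi_sound P x phi) <->
  forall D k (s : nat -> structure V D), trace_init_bad P k s ->
    ~ exists m, prophecy_marking (fun i d => phi_holds_at (s i) d) k m.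
Proof.
  split.
  - intros Hsafe D k s Htr [m Hm].
    apply (Hsafe D k (fun i => expand_rel (s i) (m i))), trace_Pi_sound_iff; auto.
  - intros H D k s' Htr.
    assert (Hs' : s' = fun i => expand_rel (reduct (incl_rel V) (s' i))
                                  (fun d => rint (s' i) None (fun _ => d)))
      by (apply functional_extensionality; intro; apply expand_rel_reduct).
    rewrite Hs' in Htr; apply trace_Pi_sound_iff in Htr as [Htr Hm].
    exact (H D k _ Htr (ex_intro _ _ Hm)).
Qed.

End Prophecy.

Theorem theorem5p2 (V : vocab) (P : safety_problem V) (x : nat) (phi : formula V) :
  well_formed_sp P ->
  (forall n, free n phi -> n = x) ->
  (sound_prophecy P x phi <-> safe (Pi_sound P x phi)).
Proof.
  intros _ phi_free.
  rewrite sound_prophecy_iff, safe_Pi_sound_iff by exact phi_free.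
  split; intros H D k s Htr; apply common_witness_iff_no_marking, H, Htr.
Qed.
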